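(* Let $G$ be a finite group, $\xi:G\to G$ an automorphism, $k>0$ an integer, and $\nu:G^k\to G^k$ the automorphism $\nu(g_0,\dots,g_{k-1})=(\xi(g_{k-1}),g_0,\dots,g_{k-2})$. Let $G^k$ act on $KG^k$ by $a\cdot b=ab\nu(a)^{-1}$ and $G$ act on $KG$ by $a\cdot b=ab\xi(a)^{-1}$ (for group elements $a,b$, extended linearly in $b$). Then the map $G^k\to G$, $(g_0,\dots,g_{k-1})\mapsto g_{k-1}\cdots g_0$, induces a linear isomorphism of coinvariant spaces $(KG^k)_{G^k}\to(KG)_G$.
   Context: $K$ is a field of characteristic $0$; $(KG)_G$ denotes the space of coinvariants $KG/\mathrm{span}\{a\cdot b-b\}$. *)

From HB Require Import structures.
From mathcomp Require Import all_boot all_order all_algebra all_fingroup.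
Set Implicit Arguments. Unset Strict Implicit. Unset Printing Implicit Defensive.
Import GRing.Theory.
Local Open Scope ring_scope.

(* The group algebra K[T] of a finite set T, as the K-vector space of
   finitely supported functions T -> K; [bas x] is the basis vector of x. *)
Definition galg (K : fieldType) (T : finType) := {ffun T -> K^o}.

Definition bas (K : fieldType) (T : finType) (x : T) : galg K T :=
  [ffun y => (y == x)%:R].

(* Span of {a.b - b} for an action [act] of A on the basis T:
   the kernel of the projection K[T] -> K[T]_A (coinvariants). *)
Definition coinv_rel (K : fieldType) (A T : finType) (act : A -> T -> T)
  : {vspace galg K T} :=
  <<[seq bas K (act a b) - bas K b | a <- enum A, b <- enum T]>>%VS.

Definition linext (K : fieldType) (T U : finType) (f : T -> U)
  : 'Hom(galg K T, galg K U) :=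
  linfun (fun v : galg K T => \sum_(x : T) v x *: bas K (f x)).

(* The linear map L : V -> V' induces a well-defined linear isomorphism
   V / W -> V' / W'. *)
Definition induces_iso (K : fieldType) (vT wT : vectType K) (L : 'Hom(vT, wT))
  (W : {vspace vT}) (W' : {vspace wT}) : Prop :=
  [/\ (L @: W <= W')%VS,                              (* well defined *)
      (forall v, L v \in W' -> v \in W)               (* injective *)
    & (L @: fullv + W' = fullv)%VS].                  (* surjective *)

Section Twisted.
Variables (gT : finGroupType) (xi : gT -> gT) (k : nat).
Local Open Scope group_scope.

Definition nu (g : {ffun 'I_k -> gT}) : {ffun 'I_k -> gT} :=
  [ffun i : 'I_k => if val i == 0%N then xi (g (ord_pred i)) else g (ord_pred i)].

Definition tw_actk (a b : {ffun 'I_k -> gT}) : {ffun 'I_k -> gT} :=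
  [ffun i => a i * b i * (nu a i)^-1].

Definition tw_act1 (a b : gT) : gT := a * b * (xi a)^-1.

Definition revprod (g : {ffun 'I_k -> gT}) : gT :=
  \prod_(i <- rev (enum 'I_k)) g i.
End Twisted.

(** The map is induced by [f := revprod], which is equivariant along
    [a |-> a_(k-1)] and has the section [s y := (y, 1, ..., 1)], equivariant
    along [c |-> (c, ..., c)].  Moreover every [g] lies in the orbit of
    [s (f g)]: twisting by the suffix products [a_i := g_(k-1) ... g_(i+1)]
    collapses [g] to [(f g, 1, ..., 1)].  These three facts alone make the
    linear extension of [f] an isomorphism on coinvariants, in any
    characteristic and for any [xi] fixing [1]. *)

From HB Require Import structures.
From mathcomp Require Import all_boot all_order all_algebra all_fingroup.
Set Implicit Arguments. Unset Strict Implicit. Unset Printing Implicit Defensive.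
Import GRing.Theory.
Local Open Scope ring_scope.

Section LinearExtension.
Variable K : fieldType.

Lemma galg_bas_sum (T : finType) (v : galg K T) : v = \sum_x v x *: bas K x.
Proof.
apply/ffunP => y; rewrite sum_ffunE (bigD1 y) //= big1 => [|x /negbTE nx].
  by rewrite !ffunE eqxx addr0 /GRing.scale /= mulr1.
by rewrite !ffunE eq_sym nx /GRing.scale /= mulr0.
Qed.

Section Map.
Variables (T U : finType) (f : T -> U).

Definition linext_fun (v : galg K T) : galg K U := \sum_x v x *: bas K (f x).

Lemma linext_fun_is_linear : linear linext_fun.
Proof.
move=> a u w; rewrite /linext_fun scaler_sumr -big_split; apply: eq_bigr => x _.
by rewrite !ffunE scalerA scalerDl.
Qed.

HB.instance Definition _ :=
  GRing.isLinear.Build K (galg K T) (galg K U) _ linext_fun linext_fun_is_linear.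

Lemma linextE v : linext K f v = \sum_x v x *: bas K (f x).
Proof. exact: (lfunE (linext_fun : {linear _ -> _})). Qed.

Lemma linext_bas x : linext K f (bas K x) = bas K (f x).
Proof.
rewrite linextE (bigD1 x) //= big1 => [|y /negbTE ny].
  by rewrite ffunE eqxx scale1r addr0.
by rewrite ffunE ny scale0r.
Qed.

End Map.

Lemma linext_comp (T U V : finType) (f : U -> V) (g : T -> U) v :
  linext K f (linext K g v) = linext K (f \o g) v.
Proof.
rewrite [linext K g v]linextE linear_sum linextE; apply: eq_bigr => x _.
by rewrite linearZ /= linext_bas.
Qed.

End LinearExtension.

Section Coinvariants.
Variables (K : fieldType) (A T : finType) (act : A -> T -> T).

Lemma memv_coinv_rel a t : bas K (act a t) - bas K t \in coinv_rel K act.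
Proof. by apply/memv_span/allpairs_f; rewrite mem_enum. Qed.

Lemma limg_coinv_rel (vT : vectType K) (L : 'Hom(galg K T, vT)) (W : {vspace vT}) :
  (forall a t, L (bas K (act a t) - bas K t) \in W) -> (L @: coinv_rel K act <= W)%VS.
Proof.
move=> LW; rewrite /coinv_rel limg_span; apply/span_subvP => y.
by case/mapP => x /allpairsP [[a t] [_ _ ->]] ->.
Qed.

Lemma sub_linext_coinv_rel (g : T -> T) v :
  (forall t, exists a, act a t = g t) -> v - linext K g v \in coinv_rel K act.
Proof.
move=> g_orbit; rewrite {1}(galg_bas_sum v) linextE -sumrB.
apply: memv_suml => t _; rewrite -scalerBr memvZ //.
have [a <-] := g_orbit t.
rewrite -opprB memvN; exact: memv_coinv_rel.
Qed.

End Coinvariants.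

Lemma limg_linext_coinv_rel (K : fieldType) (A T B U : finType)
    (act : A -> T -> T) (actB : B -> U -> U) (f : T -> U) :
  (forall a t, exists b, f (act a t) = actB b (f t)) ->
  (linext K f @: coinv_rel K act <= coinv_rel K actB)%VS.
Proof.
move=> f_equiv; apply: limg_coinv_rel => a t.
have [b fE] := f_equiv a t.
rewrite linearB /= !linext_bas fE; exact: memv_coinv_rel.
Qed.

Section InducedIso.
Variables (K : fieldType) (A T B U : finType).
Variables (actA : A -> T -> T) (actB : B -> U -> U) (f : T -> U) (s : U -> T).
Hypothesis f_equiv : forall a t, exists b, f (actA a t) = actB b (f t).
Hypothesis s_equiv : forall b u, exists a, s (actB b u) = actA a (s u).
Hypothesis fK : cancel s f.
Hypothesis sf_orbit : forall t, exists a, actA a t = s (f t).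

Theorem linext_induces_iso :
  induces_iso (linext K f) (coinv_rel K actA) (coinv_rel K actB).
Proof.
have linext_fK w : linext K f (linext K s w) = w.
  rewrite linext_comp linextE [RHS](galg_bas_sum w).
  by apply: eq_bigr => u _; rewrite /= fK.
split; first exact: limg_linext_coinv_rel.
- move=> v fvW.
  have sfvW : linext K s (linext K f v) \in coinv_rel K actA.
    exact: subvP (limg_linext_coinv_rel _ s_equiv) _ (memv_img _ fvW).
  rewrite -(subrK (linext K s (linext K f v)) v) memvD //.
  by rewrite linext_comp sub_linext_coinv_rel.
- apply/eqP; rewrite eqEsubv subvf; apply/subvP => w _.
  rewrite -(linext_fK w) -[linext K f _]addr0.
  by rewrite memv_add ?memv_img ?memvf ?mem0v.
Qed.

End InducedIso.

Section TwistedProduct.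
Variables (gT : finGroupType) (xi : gT -> gT).
Local Open Scope group_scope.

Lemma prodg_rev_iota_telescope (A B : nat -> gT) n :
  \prod_(j <- rev (iota 1 n)) (A j * B j * (A j.-1)^-1)
  = A n * (\prod_(j <- rev (iota 1 n)) B j) * (A 0)^-1.
Proof.
elim: n => [|n IH]; first by rewrite !big_nil mulg1 mulgV.
rewrite -[n.+1]addn1 iotaD add1n rev_cat !big_cat /= !big_seq1 {}IH.
by rewrite addn1 !mulgA mulgKV.
Qed.

Variable k : nat.
Local Notation Gk := {ffun 'I_k.+1 -> gT}.

Lemma revprod_iota (g : Gk) : revprod g = \prod_(j <- rev (iota 0 k.+1)) g (inord j).
Proof.
rewrite /revprod -val_enum_ord -map_rev big_map.
by apply: eq_bigr => i _; rewrite inord_val.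
Qed.

Lemma nu_inord0 (a : Gk) : nu xi a (inord 0) = xi (a (inord k)).
Proof.
rewrite ffunE /= inordK //=; congr (xi (a _)); apply: val_inj.
by rewrite /= !inordK // add0n modn_small.
Qed.

Lemma nu_inord_gt0 (a : Gk) j : (0 < j <= k)%N -> nu xi a (inord j) = a (inord j.-1).
Proof.
case/andP=> j_gt0 jk; rewrite ffunE /= inordK ?ltnS // eqn0Ngt j_gt0 /=; congr (a _).
have j1k : (j.-1 < k.+1)%N by rewrite ltnS (leq_trans (leq_pred j)).
apply: val_inj; rewrite /= (inordK j1k) inordK ?ltnS //.
by case: j j_gt0 jk j1k => //= j _ _ j1k; rewrite modnDr modn_small.
Qed.

Lemma revprod_tw_actk (a b : Gk) :
  revprod (tw_actk xi a b) = tw_act1 xi (a (inord k)) (revprod b).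
Proof.
rewrite !revprod_iota /= rev_cons !big_rcons /=.
rewrite (eq_big_seq (fun j => a (inord j) * b (inord j) * (a (inord j.-1))^-1)).
  by rewrite prodg_rev_iota_telescope ffunE nu_inord0 /tw_act1 !mulgA mulgKV.
move=> j; rewrite mem_rev mem_iota add1n ltnS => j_range.
by rewrite ffunE nu_inord_gt0.
Qed.

Definition pad1 (y : gT) : Gk := [ffun i : 'I_k.+1 => if i == 0 :> nat then y else 1].

Lemma revprod_pad1 y : revprod (pad1 y) = y.
Proof.
rewrite revprod_iota /= rev_cons big_rcons /= big1_seq ?mul1g.
  by rewrite ffunE inordK.
move=> j; rewrite mem_rev mem_iota add1n ltnS => /andP[_ /andP[j_gt0 jk]].
by rewrite ffunE /= inordK ?ltnS // eqn0Ngt j_gt0.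
Qed.

Lemma tw_actk_pad1 c y : tw_actk xi [ffun=> c] (pad1 y) = pad1 (tw_act1 xi c y).
Proof.
apply/ffunP => i; rewrite !ffunE.
by case: (val i =P 0%N) => _ //=; rewrite mulg1 mulgV.
Qed.

Definition sufprod (g : Gk) m := \prod_(j <- rev (iota m (k.+1 - m))) g (inord j).

Lemma sufprodS (g : Gk) m : (m <= k)%N -> sufprod g m = sufprod g m.+1 * g (inord m).
Proof. by move=> mk; rewrite /sufprod subSn // subSS /= rev_cons big_rcons. Qed.

Hypothesis xi1 : xi 1 = 1.

Lemma tw_actk_orbit_pad1 (g : Gk) :
  tw_actk xi [ffun i : 'I_k.+1 => sufprod g i.+1] g = pad1 (revprod g).
Proof.
apply/ffunP => i; rewrite -(inord_val i) ffunE [pad1 _ _]ffunE.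
case: (val i) (ltn_ord i) => [|j] jk; rewrite inordK //=.
  rewrite nu_inord0 !ffunE !inordK // /sufprod subnn big_nil xi1 invg1 mulg1.
  by rewrite -(sufprodS g (leq0n k)) revprod_iota.
rewrite nu_inord_gt0 // !ffunE /= (inordK jk) inordK; last exact: ltnW.
by rewrite -sufprodS ?mulgV.
Qed.

End TwistedProduct.

Theorem lemma6p4 (K : fieldType) (hK : [pchar K]%R =i pred0)
  (gT : finGroupType) (xi : gT -> gT)
  (xi_morph : {morph xi : x y / (x * y)%g}) (xi_bij : bijective xi)
  (k : nat) (hk : (0 < k)%N) :
  induces_iso (linext K (@revprod gT k))
    (coinv_rel K (@tw_actk gT xi k))
    (coinv_rel K (@tw_act1 gT xi)).
Proof.
case: k hk => // k _.
have xi1 : xi 1%g = 1%g by apply: (mulgI (xi 1%g)); rewrite -xi_morph !mulg1.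
apply: (linext_induces_iso K (s := @pad1 gT k)).
- by move=> a b; exists (a (inord k)); rewrite revprod_tw_actk.
- by move=> c y; exists [ffun=> c]; rewrite tw_actk_pad1.
- exact: revprod_pad1.
- by move=> g; eexists; apply: tw_actk_orbit_pad1.
Qed.
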